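(* Let $h,r>0$ with $\frac hr\le\omega$. Then on $[-h,h]$, $$\frac{d}{dx}\left(\frac{1}{\rho_0}\,f'(\rho_0')\right)\ge0,$$ where $f'(t)=\frac{t(t^2+2)}{(1+t^2)^{3/2}}$ (the derivative of $f(t)=t^2/\sqrt{1+t^2}$).
   Context: Let $\Xi$ be the unique positive solution of $\xi\tanh\frac1\xi+\mathrm{sech}^2\frac1\xi=\xi$, and $\omega=\frac{1}{\Xi\cosh(1/\Xi)}$. Under $h/r\le\omega$, let $\Pi_0>0$ be the largest solution of $r=\Pi\cosh\frac{h}{\Pi}$ and $\rho_0(x)=\Pi_0\cosh\frac{x}{\Pi_0}$ on $[-h,h]$. *)

From Stdlib Require Import Reals.
From Coquelicot Require Import Coquelicot.
Open Scope R_scope.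

Definition sech (y : R) : R := / cosh y.

Definition is_Xi (xi : R) : Prop :=
  0 < xi /\ xi * tanh (/ xi) + (sech (/ xi))^2 = xi.

Definition omega_of (xi : R) : R := / (xi * cosh (/ xi)).

Definition is_Pi0 (h r P0 : R) : Prop :=
  0 < P0 /\ r = P0 * cosh (h / P0) /\
  (forall P, 0 < P -> r = P * cosh (h / P) -> P <= P0).

Definition rho0 (P0 : R) (x : R) : R := P0 * cosh (x / P0).

Definition f (t : R) : R := t ^ 2 / sqrt (1 + t ^ 2).
Definition fprime (t : R) : R := t * (t ^ 2 + 2) / (sqrt (1 + t ^ 2)) ^ 3.

(** Since [rho0' = sinh (x / P0)] and [1 + sinh ^ 2 = cosh ^ 2], the function to differentiate is
    [y |-> g (y / P0) / P0] with [g u = sinh u (cosh u ^ 2 + 1) / cosh u ^ 4], and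
    [g' u = (4 - cosh u ^ 2 - cosh u ^ 4) / cosh u ^ 5]. So it suffices that
    [cosh (x / P0) ^ 2 <= 1.55] on [[-h, h]], because then [c ^ 2 + c ^ 4 <= 4].
    As [u / cosh u] takes the value [h / r] somewhere on [(0, 1 / Xi]], maximality of
    [P0] gives [h / P0 <= 1 / Xi]. Finally, with [w = exp (- 2 / Xi)] the defining
    equation of [Xi] reads [w = 2 / Xi - 1], i.e. [w e^w = 1 / e], and
    [cosh (1 / Xi) ^ 2 = (1 + w) ^ 2 / (4 w) <= 1.55]. *)

From Stdlib Require Import Reals Lra Psatz.
From Coquelicot Require Import Coquelicot.
Open Scope R_scope.

Lemma cosh_pos (u : R) : 0 < cosh u.
Proof. unfold cosh; pose proof (exp_pos u); pose proof (exp_pos (- u)); lra. Qed.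

Lemma cosh_sq_sub_sinh_sq (u : R) : cosh u ^ 2 - sinh u ^ 2 = 1.
Proof.
  unfold cosh, sinh; rewrite exp_Ropp.
  pose proof (exp_pos u); field; lra.
Qed.

Lemma exp_le_exp (u v : R) : u <= v -> exp u <= exp v.
Proof. intros [Huv | ->]; [left; apply exp_increasing|]; lra. Qed.

Lemma cosh_le_of_Rabs_le (u a : R) : Rabs u <= a -> cosh u <= cosh a.
Proof.
  intros Hua; pose proof (Rle_abs u); pose proof (Rle_abs (- u)); rewrite Rabs_Ropp in *.
  assert (Hdiff : cosh a - cosh u = (exp a - exp u) * (1 - exp (- (a + u))) / 2).
  { unfold cosh; rewrite Ropp_plus_distr, exp_plus, !exp_Ropp.
    pose proof (exp_pos a); pose proof (exp_pos u); field; lra. }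
  assert (Hau : exp u <= exp a) by (apply exp_le_exp; lra).
  assert (Hsum : exp (- (a + u)) <= 1) by (rewrite <- exp_0; apply exp_le_exp; lra).
  nra.
Qed.

Lemma is_Xi_exp_eq (Xi : R) : is_Xi Xi -> exp (/ Xi) ^ 2 * (2 - Xi) = Xi.
Proof.
  intros [HXi Heq]; unfold tanh, sech, sinh, cosh in Heq; rewrite exp_Ropp in Heq.
  set (E := exp (/ Xi)) in *; assert (HE : 0 < E) by apply exp_pos.
  replace ((E - / E) / 2 / ((E + / E) / 2)) with ((E ^ 2 - 1) / (E ^ 2 + 1)) in Heq
    by (field; nra).
  replace (/ ((E + / E) / 2)) with (2 * E / (E ^ 2 + 1)) in Heq by (field; nra).
  apply (Rmult_eq_compat_r ((E ^ 2 + 1) ^ 2)) in Heq.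
  replace ((Xi * ((E ^ 2 - 1) / (E ^ 2 + 1)) + (2 * E / (E ^ 2 + 1)) ^ 2) * (E ^ 2 + 1) ^ 2)
    with (Xi * (E ^ 2 - 1) * (E ^ 2 + 1) + 4 * E ^ 2) in Heq by (field; nra).
  nra.
Qed.

(* [w e^w = e^-1] gives [w ~ 0.279]; the bound [(1 - w/2)^2 <= e^-w <= 3 w] already
   forces [w >= 8 - sqrt 60 ~ 0.254], which is enough. *)
Lemma sq_succ_le_of_exp_opp_eq (w : R) :
  0 < w -> exp (- w) = exp 1 * w -> (1 + w) ^ 2 <= 155 / 100 * (4 * w).
Proof.
  intros Hw Heq.
  assert (He : 2 <= exp 1) by (pose proof (exp_ineq1_le 1); lra).
  assert (Hw1 : w < 1).
  { assert (exp (- w) < 1) by (rewrite <- exp_0; apply exp_increasing; lra). nra. }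
  assert (Hsq : exp (- w) = exp (- w / 2) ^ 2)
    by (replace (- w) with (- w / 2 + - w / 2) at 1 by field; rewrite exp_plus; ring).
  pose proof (exp_ineq1_le (- w / 2)); pose proof exp_le_3.
  assert ((1 - w / 2) ^ 2 <= 3 * w) by nra.
  nra.
Qed.

Lemma cosh_inv_Xi_sq_le (Xi : R) : is_Xi Xi -> cosh (/ Xi) ^ 2 <= 155 / 100.
Proof.
  intros HXi; pose proof (is_Xi_exp_eq Xi HXi) as Heq; destruct HXi as [HXi0 _].
  set (a := / Xi) in *; set (E := exp a) in *.
  assert (HE : 0 < E) by apply exp_pos.
  set (w := / E ^ 2).
  assert (Hw : 0 < w) by (apply Rinv_0_lt_compat; nra).
  assert (Hwa : w = 2 * a - 1).
  { unfold w, a; apply (Rmult_eq_reg_l (E ^ 2 * Xi)); [|nra].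
    replace (E ^ 2 * Xi * (2 * / Xi - 1)) with (E ^ 2 * (2 - Xi)) by (field; lra).
    rewrite Heq; field; nra. }
  assert (Hexp : exp (- w) = exp 1 * w).
  { replace (- w) with (1 + - (a + a)) by lra.
    rewrite exp_plus, exp_Ropp, exp_plus; fold E; unfold w; field; lra. }
  assert (Hcosh : cosh a ^ 2 = (1 + w) ^ 2 / (4 * w)).
  { unfold cosh; rewrite exp_Ropp; fold E; unfold w; field; lra. }
  rewrite Hcosh; apply Rle_div_l; [lra|].
  apply sq_succ_le_of_exp_opp_eq; assumption.
Qed.

Lemma continuity_id_div_cosh : continuity (fun u => u / cosh u).
Proof.
  apply (continuity_div id cosh).
  - apply derivable_continuous, derivable_id.
  - apply derivable_continuous, derivable_cosh.
  - intros u; apply Rgt_not_eq, cosh_pos.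
Qed.

Lemma id_div_cosh_surj (a k : R) :
  0 < k -> 0 < a -> k <= a / cosh a -> exists z, 0 < z <= a /\ z / cosh z = k.
Proof.
  intros Hk Ha Hka.
  destruct (IVT_cor (fun u => u / cosh u - k) 0 a) as [z [Hz Hzk]].
  - apply continuity_minus; [exact continuity_id_div_cosh | apply continuity_const].
    intros u v; reflexivity.
  - lra.
  - unfold Rdiv at 1; rewrite Rmult_0_l; nra.
  - exists z; split; [split|]; try lra.
    destruct (proj1 Hz) as [|<-]; [assumption|].
    unfold Rdiv in Hzk; rewrite Rmult_0_l in Hzk; lra.
Qed.

Lemma Pi0_ge (h r P0 a : R) : 0 < h -> 0 < r -> 0 < a ->
  h / r <= a / cosh a -> is_Pi0 h r P0 -> h / P0 <= a.
Proof.
  intros Hh Hr Ha Hhr [HP0 [_ Hmax]].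
  destruct (id_div_cosh_surj a (h / r)) as [z [Hz Hzk]];
    try assumption; [apply Rdiv_lt_0_compat; lra|].
  pose proof (cosh_pos z).
  assert (Hroot : r = h / z * cosh (h / (h / z))).
  { replace (h / (h / z)) with z by (field; lra).
    apply (Rmult_eq_reg_l z); [|lra].
    replace (z * r) with (z / cosh z * (r * cosh z)) by (field; lra).
    rewrite Hzk; field; lra. }
  assert (HP0z : h / z <= P0) by (apply Hmax; [apply Rdiv_lt_0_compat; lra | exact Hroot]).
  apply Rle_div_l; [lra|].
  apply Rle_div_l in HP0z; [nra|lra].
Qed.

Definition sech_fprime_sinh (u : R) : R := sinh u * (cosh u ^ 2 + 1) / cosh u ^ 4.

Lemma Derive_rho0 (P y : R) : P <> 0 -> Derive (rho0 P) y = sinh (y / P).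
Proof.
  intros HP; apply is_derive_unique; unfold rho0, cosh, sinh.
  auto_derive; [exact I|]. unfold Rdiv; field; exact HP.
Qed.

Lemma fprime_sinh (u : R) : fprime (sinh u) = sinh u * (cosh u ^ 2 + 1) / cosh u ^ 3.
Proof.
  pose proof (cosh_sq_sub_sinh_sq u) as Hid; pose proof (cosh_pos u).
  unfold fprime.
  replace (1 + sinh u ^ 2) with (cosh u ^ 2) by lra.
  rewrite sqrt_pow2 by lra.
  replace (sinh u ^ 2) with (cosh u ^ 2 - 1) by lra.
  field; lra.
Qed.

Lemma inv_rho0_fprime (P y : R) : 0 < P ->
  / rho0 P y * fprime (Derive (rho0 P) y) = sech_fprime_sinh (y / P) / P.
Proof.
  intros HP; rewrite Derive_rho0, fprime_sinh by lra.
  unfold rho0, sech_fprime_sinh; pose proof (cosh_pos (y / P)).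
  field; lra.
Qed.

Lemma is_derive_sech_fprime_sinh (u : R) :
  is_derive sech_fprime_sinh u ((4 - cosh u ^ 2 - cosh u ^ 4) / cosh u ^ 5).
Proof.
  pose proof (cosh_pos u); unfold sech_fprime_sinh.
  auto_derive.
  { change (cosh u ^ 4 <> 0); apply pow_nonzero; lra. }
  pose proof (cosh_sq_sub_sinh_sq u).
  field_simplify; [|lra|lra].
  replace (sinh u ^ 2) with (cosh u ^ 2 - 1) by lra.
  field; lra.
Qed.

Lemma is_derive_sech_fprime_sinh_scaled (P y : R) : P <> 0 ->
  is_derive (fun t => sech_fprime_sinh (t / P) / P) y
    ((4 - cosh (y / P) ^ 2 - cosh (y / P) ^ 4) / (P ^ 2 * cosh (y / P) ^ 5)).
Proof.
  intros HP.
  assert (Hdiv : is_derive (fun t => t / P) y (/ P))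
    by (auto_derive; [exact I | field; exact HP]).
  pose proof (is_derive_comp _ _ y _ _ (is_derive_sech_fprime_sinh (y / P)) Hdiv) as Hcomp.
  apply (is_derive_scal _ _ (/ P)) in Hcomp.
  apply (is_derive_ext (fun t => / P * sech_fprime_sinh (t / P)));
    [intro t; apply Rmult_comm|].
  replace ((4 - cosh (y / P) ^ 2 - cosh (y / P) ^ 4) / (P ^ 2 * cosh (y / P) ^ 5))
    with (/ P * scal (/ P) ((4 - cosh (y / P) ^ 2 - cosh (y / P) ^ 4) / cosh (y / P) ^ 5));
    [exact Hcomp|].
  pose proof (cosh_pos (y / P)); unfold scal; simpl; unfold mult; simpl.
  field; lra.
Qed.

Theorem lemma4p3 (h r Xi P0 : R) :
  0 < h -> 0 < r ->
  is_Xi Xi ->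
  h / r <= omega_of Xi ->
  is_Pi0 h r P0 ->
  forall x, -h <= x <= h ->
    ex_derive (fun y => / rho0 P0 y * fprime (Derive (rho0 P0) y)) x /\
    0 <= Derive (fun y => / rho0 P0 y * fprime (Derive (rho0 P0) y)) x.
Proof.
  intros Hh Hr HXi Hom HPi x Hx.
  assert (HP0 : 0 < P0) by apply HPi.
  assert (HXi0 : 0 < Xi) by apply HXi.
  assert (Hratio : h / P0 <= / Xi).
  { apply (Pi0_ge h r P0); try assumption.
    - apply Rinv_0_lt_compat, HXi0.
    - unfold omega_of in Hom; pose proof (cosh_pos (/ Xi)).
      replace (/ Xi / cosh (/ Xi)) with (/ (Xi * cosh (/ Xi))) by (field; lra).
      exact Hom. }
  assert (Hcosh : cosh (x / P0) ^ 2 <= 155 / 100).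
  { pose proof (cosh_pos (x / P0)).
    assert (cosh (x / P0) <= cosh (/ Xi)).
    { apply cosh_le_of_Rabs_le; rewrite Rabs_div, (Rabs_pos_eq P0) by lra.
      apply (Rle_trans _ (h / P0)); [|exact Hratio].
      apply Rmult_le_compat_r; [left; apply Rinv_0_lt_compat, HP0|].
      apply Rabs_le; lra. }
    pose proof (cosh_inv_Xi_sq_le Xi HXi); nra. }
  pose proof (is_derive_sech_fprime_sinh_scaled P0 x ltac:(lra)) as HD.
  apply (is_derive_ext _ (fun y => / rho0 P0 y * fprime (Derive (rho0 P0) y))) in HD;
    [|intro y; symmetry; apply inv_rho0_fprime, HP0].
  split; [eexists; exact HD|].
  erewrite is_derive_unique; [|exact HD].
  pose proof (cosh_pos (x / P0)).
  apply Rle_mult_inv_pos; [nra | apply Rmult_lt_0_compat; apply pow_lt; lra].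
Qed.
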